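(* Consider the BSSC$(\alpha,\beta)$ with $\alpha+\beta\ne1$, used with feedback, with the transmission cost $\gamma(a_i,b_{i-1})=1$ if $a_i=b_{i-1}$ and $0$ otherwise, and average cost constraint $\frac1{n+1}\mathbf E[\sum_{i=0}^n\gamma(A_i,B_{i-1})]\le\kappa$. Let $\nu,\lambda$ be as defined below and $\kappa_{max}=\nu$. (a) For $\kappa\in[0,\kappa_{max}]$, every $n$ and every initial state $b_{-1}$, the constrained finite-time feedback capacity $C^{FB,BSSC}_{A^n\to B^n}(\kappa)$ is attained by the time-invariant input $\pi_i(a_i|a^{i-1},b^{i-1})=\pi^{TI}(a_i|b_{i-1})$, $i=0,\dots,n$, where $\pi^{TI}(a|b)=\kappa$ if $a=b$ and $1-\kappa$ if $a\ne b$; the corresponding output transition is time-invariant with $\mathbf P^{TI}(b'|b)=\bar\lambda$ if $b'=b$ and $1-\bar\lambda$ otherwise, where $\bar\lambda=\alpha\kappa+(1-\kappa)(1-\beta)$; and $$C^{FB,BSSC}_{A^n\to B^n}(\kappa)=(n+1)\max_{\pi(\cdot|b_{-1}):\ \mathbf E[\gamma(A_0,b_{-1})]\le\kappa}I(A_0;B_0|B_{-1}=b_{-1})\quad\forall b_{-1}\in\{0,1\}.$$ (b) The per unit time feedback capacity with cost is $$C^{FB,BSSC}_{A^\infty\to B^\infty}(\kappa)=\begin{cases}H(\bar\lambda)-\kappa H(\alpha)-(1-\kappa)H(\beta),&\kappa\le\kappa_{max},\\ H(\lambda)-\kappa_{max}H(\alpha)-(1-\kappa_{max})H(\beta),&\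kappa>\kappa_{max}.\end{cases}$$
   Context: BSSC$(\alpha,\beta)$: $\mathbb A=\mathbb B=\{0,1\}$, $\mathbf P(b_i=a_i|a_i,b_{i-1})=\alpha$ if $a_i=b_{i-1}$ and $=\beta$ if $a_i\ne b_{i-1}$, time-invariant. $H$ is the binary entropy (base 2). $\mu=\frac{H(\beta)-H(\alpha)}{1-\alpha-\beta}$, $\lambda=\frac1{1+2^\mu}$, $\nu=\frac{1-(1-\beta)(1+2^\mu)}{(\alpha+\beta-1)(1+2^\mu)}$. With fixed initial state $b_{-1}$ known to encoder and decoder, $C^{FB,BSSC}_{A^n\to B^n}(\kappa)=\sup\sum_{i=0}^nI(A^i;B_i|B^{i-1})$ over feedback input distributions $\{\mathbf P(a_i|a^{i-1},b^{i-1})\}_{i=0}^n$ satisfying the average cost constraint, and $C^{FB,BSSC}_{A^\infty\to B^\infty}(\kappa)=\lim_{n\to\infty}\frac1{n+1}C^{FB,BSSC}_{A^n\to B^n}(\kappa)$. *)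

From Stdlib Require Import Reals List.
Import ListNotations.
Open Scope R_scope.

Definition log2 (x : R) : R := ln x / ln 2.

Definition plog (p r : R) : R := if Req_EM_T p 0 then 0 else p * log2 r.

Definition Hb (p : R) : R := - plog p p - plog (1 - p) (1 - p).

(** * The BSSC(alpha,beta) channel: Q b a bp = P(b_i = b | a_i = a, b_{i-1} = bp) *)
Definition bssc_Q (al be : R) (b a bp : bool) : R :=
  if Bool.eqb a bp
  then (if Bool.eqb b a then al else 1 - al)
  else (if Bool.eqb b a then be else 1 - be).

Definition gam (a bp : bool) : R := if Bool.eqb a bp then 1 else 0.

Definition pr (p : R) (a : bool) : R := if a then p else 1 - p.

(** Feedback input distribution: [pol i xs ys] = P(a_i = true | a^{i-1} = xs, b^{i-1} = ys)
    where xs, ys are the lists (a_0,...,a_{i-1}), (b_0,...,b_{i-1}). The fixed initial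
    state b_{-1} is a parameter known to the encoder. *)
Definition policy := nat -> list bool -> list bool -> R.
Definition valid_policy (pol : policy) : Prop := forall i xs ys, 0 <= pol i xs ys <= 1.

Fixpoint blists (k : nat) : list (list bool) :=
  match k with
  | O => [[]]
  | S k' => map (cons false) (blists k') ++ map (cons true) (blists k')
  end.
Definition sumL {A : Type} (L : list A) (f : A -> R) : R :=
  fold_right (fun x acc => f x + acc) 0 L.
Definition sumB (f : bool -> R) : R := f false + f true.

Section Process.
Variables (al be : R) (b0 : bool) (pol : policy).

(** Joint law of (A^{k-1}, B^{k-1}) given B_{-1} = b0:
    prod_{j<k} pi_j(a_j | a^{j-1}, b^{j-1}) Q(b_j | a_j, b_{j-1}). *)
Definition joint (k : nat) (xs ys : list bool) : R :=
  fold_right Rmult 1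
    (map (fun j => pr (pol j (firstn j xs) (firstn j ys)) (nth j xs false)
                   * bssc_Q al be (nth j ys false) (nth j xs false) (last (firstn j ys) b0))
         (seq 0 k)).

(** Marginals at time i (x = a^i, y = b^i, z = b^{i-1}). *)
Definition P_i (i : nat) (x y : list bool) : R := joint (S i) x y.
Definition P_z (i : nat) (z : list bool) : R :=
  sumL (blists (S i)) (fun x => sumB (fun c => P_i i x (z ++ [c]))).
Definition P_xz (i : nat) (x z : list bool) : R := sumB (fun c => P_i i x (z ++ [c])).
Definition P_yz (i : nat) (y : list bool) : R := sumL (blists (S i)) (fun x => P_i i x y).

(** Conditional mutual information I(A^i ; B_i | B^{i-1}). *)
Definition cmi_term (i : nat) : R :=
  sumL (blists (S i)) (fun x => sumL (blists (S i)) (fun y =>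
    plog (P_i i x y)
         (P_i i x y * P_z i (firstn i y) / (P_xz i x (firstn i y) * P_yz i y)))).

Definition DI (n : nat) : R := sum_f_R0 cmi_term n.

Definition cost_term (i : nat) : R :=
  sumL (blists (S i)) (fun x => sumL (blists (S i)) (fun y =>
    P_i i x y * gam (nth i x false) (last (firstn i y) b0))).
Definition avg_cost (n : nat) : R := / INR (S n) * sum_f_R0 cost_term n.

End Process.

Definition feasible (al be : R) (b0 : bool) (n : nat) (ka : R) (pol : policy) : Prop :=
  valid_policy pol /\ avg_cost al be b0 pol n <= ka.

(** Set of achievable directed-information values; C_n(kappa) is its sup. *)
Definition DIset (al be : R) (b0 : bool) (n : nat) (ka : R) (r : R) : Prop :=
  exists pol, feasible al be b0 n ka pol /\ r = DI al be b0 pol n.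

Definition is_max (S : R -> Prop) (m : R) : Prop := S m /\ (forall r, S r -> r <= m).

(** Time-invariant input pi^TI(a | b_{i-1}) = kappa if a = b_{i-1}, 1 - kappa otherwise. *)
Definition pi_TI (b0 : bool) (ka : R) : policy :=
  fun i xs ys => if last ys b0 then ka else 1 - ka.

Definition MI2 (J : bool -> bool -> R) : R :=
  sumB (fun a => sumB (fun b =>
    plog (J a b) (J a b / (sumB (fun b' => J a b') * sumB (fun a' => J a' b))))).

(** Single-letter values I(A_0;B_0 | B_{-1}=b0) over pi(.|b0) with E[gamma(A_0,b0)] <= kappa;
    p = P(A_0 = true). *)
Definition SLset (al be : R) (b0 : bool) (ka : R) (r : R) : Prop :=
  exists p, 0 <= p <= 1 /\ pr p b0 <= ka /\
            r = MI2 (fun a b => pr p a * bssc_Q al be b a b0).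

Definition mu (al be : R) : R := (Hb be - Hb al) / (1 - al - be).
Definition lam (al be : R) : R := / (1 + Rpower 2 (mu al be)).
Definition nu (al be : R) : R :=
  (1 - (1 - be) * (1 + Rpower 2 (mu al be))) / ((al + be - 1) * (1 + Rpower 2 (mu al be))).
Definition lambar (al be ka : R) : R := al * ka + (1 - ka) * (1 - be).

From Stdlib Require Import Reals List Lra Lia Psatz.
Import ListNotations.
Open Scope R_scope.

(** Fix a time [i] and an output history [z = b^{i-1}] of probability [W], and let [V] be
    the probability of [z] together with [A_i = b_{i-1}].  Since the channel only sees
    whether [A_i] equals the state [b_{i-1}], the law of [B_i] given [z] depends on the
    input only through [V / W], and [I(A^i; B_i | B^{i-1})] splits as the sum over [z] of
    [W * F (V / W)], where [F x = H(lambar x) - x H(al) - (1 - x) H(be)] is the single-letter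
    information at cost [x]; the expected cost at time [i] is the sum of the [V]'s.
    [F] is concave, its slope is nonnegative on [[0, nu]] and vanishes at [nu].  The
    tangent line of [F] at [kappa] therefore bounds the directed information of any
    feasible input by [(n + 1) F kappa], and the time-invariant input, which keeps
    [V / W = kappa] on every history, attains it.  For [kappa > nu] the tangent at [nu]
    is horizontal and gives the unconstrained bound [(n + 1) F nu]. *)

Lemma sumL_ext_in {A} (L : list A) (f g : A -> R) :
  (forall x, In x L -> f x = g x) -> sumL L f = sumL L g.
Proof.
  induction L as [|x L IH]; simpl; intros H; [reflexivity|].
  rewrite H, IH by auto. reflexivity.
Qed.

Lemma sumL_plus {A} (L : list A) (f g : A -> R) :
  sumL L (fun x => f x + g x) = sumL L f + sumL L g.
Proof. induction L as [|x L IH]; simpl; [|rewrite IH]; ring. Qed.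

Lemma sumL_minus {A} (L : list A) (f g : A -> R) :
  sumL L (fun x => f x - g x) = sumL L f - sumL L g.
Proof. induction L as [|x L IH]; simpl; [|rewrite IH]; ring. Qed.

Lemma sumL_scal_l {A} (L : list A) (c : R) (f : A -> R) :
  sumL L (fun x => c * f x) = c * sumL L f.
Proof. induction L as [|x L IH]; simpl; [|rewrite IH]; ring. Qed.

Lemma sumL_scal_r {A} (L : list A) (c : R) (f : A -> R) :
  sumL L (fun x => f x * c) = sumL L f * c.
Proof. induction L as [|x L IH]; simpl; [|rewrite IH]; ring. Qed.

Lemma sumL_app {A} (L1 L2 : list A) (f : A -> R) :
  sumL (L1 ++ L2) f = sumL L1 f + sumL L2 f.
Proof. induction L1 as [|x L1 IH]; simpl; [|rewrite IH]; ring. Qed.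

Lemma sumL_map {A B} (L : list A) (h : A -> B) (f : B -> R) :
  sumL (map h L) f = sumL L (fun x => f (h x)).
Proof. induction L as [|x L IH]; simpl; [|rewrite IH]; reflexivity. Qed.

Lemma sumL_le {A} (L : list A) (f g : A -> R) :
  (forall x, In x L -> f x <= g x) -> sumL L f <= sumL L g.
Proof.
  induction L as [|x L IH]; simpl; intros H; [lra|].
  pose proof (H x (or_introl eq_refl)). pose proof (IH (fun y Hy => H y (or_intror Hy))).
  lra.
Qed.

Lemma sumL_nonneg {A} (L : list A) (f : A -> R) :
  (forall x, In x L -> 0 <= f x) -> 0 <= sumL L f.
Proof.
  induction L as [|x L IH]; simpl; intros H; [lra|].
  pose proof (H x (or_introl eq_refl)). pose proof (IH (fun y Hy => H y (or_intror Hy))).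
  lra.
Qed.

Lemma sumL_ge_term {A} (L : list A) (f : A -> R) (y : A) :
  (forall x, In x L -> 0 <= f x) -> In y L -> f y <= sumL L f.
Proof.
  induction L as [|x L IH]; simpl; intros H Hy; [contradiction|].
  destruct Hy as [<-|Hy].
  - assert (0 <= sumL L f) by (apply sumL_nonneg; auto). lra.
  - assert (f y <= sumL L f) by auto. assert (0 <= f x) by auto. lra.
Qed.

Lemma sumL_eq0 {A} (L : list A) (f : A -> R) :
  (forall x, In x L -> 0 <= f x) -> sumL L f = 0 -> forall x, In x L -> f x = 0.
Proof.
  intros H H0 x Hx. pose proof (sumL_ge_term L f x H Hx). specialize (H x Hx). lra.
Qed.

Lemma sumB_ext (f g : bool -> R) : (forall a, f a = g a) -> sumB f = sumB g.
Proof. intros H; unfold sumB; rewrite !H; reflexivity. Qed.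

Lemma sumB_scal_l (c : R) (f : bool -> R) : sumB (fun a => c * f a) = c * sumB f.
Proof. unfold sumB; ring. Qed.

Lemma sumB_sumL {A} (L : list A) (g : bool -> A -> R) :
  sumB (fun a => sumL L (g a)) = sumL L (fun x => sumB (fun a => g a x)).
Proof. unfold sumB. rewrite <- sumL_plus. reflexivity. Qed.

Lemma sumL_comm {A B} (L1 : list A) (L2 : list B) (g : A -> B -> R) :
  sumL L1 (fun x => sumL L2 (g x)) = sumL L2 (fun y => sumL L1 (fun x => g x y)).
Proof.
  induction L1 as [|x L1 IH]; simpl.
  - induction L2; simpl; [|rewrite <- IHL2]; ring.
  - rewrite IH, <- sumL_plus. reflexivity.
Qed.

Lemma blists_length k z : In z (blists k) -> length z = k.
Proof.
  revert z. induction k; simpl; intros z H.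
  - destruct H as [<-|[]]; reflexivity.
  - apply in_app_or in H. destruct H as [H|H]; apply in_map_iff in H;
      destruct H as [z' [<- H]]; simpl; f_equal; auto.
Qed.

Lemma In_blists k z : length z = k -> In z (blists k).
Proof.
  revert k. induction z as [|a z IH]; intros k H; simpl in H; subst; simpl; [auto|].
  apply in_or_app. destruct a; [right|left]; apply in_map; auto.
Qed.

Lemma In_blists_snoc k z a : In z (blists k) -> In (z ++ [a]) (blists (S k)).
Proof.
  intros Hz. apply In_blists. rewrite length_app, (blists_length _ _ Hz). simpl. lia.
Qed.

Lemma sumL_blists_S k (F : list bool -> R) :
  sumL (blists (S k)) F = sumL (blists k) (fun z => sumB (fun c => F (z ++ [c]))).
Proof.
  revert F. induction k; intros F; [simpl; unfold sumB; ring|].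
  change (blists (S (S k))) with (map (cons false) (blists (S k)) ++ map (cons true) (blists (S k))).
  rewrite sumL_app, !sumL_map, (IHk (fun z => F (false :: z))), (IHk (fun z => F (true :: z))).
  change (blists (S k)) with (map (cons false) (blists k) ++ map (cons true) (blists k)).
  rewrite sumL_app, !sumL_map. reflexivity.
Qed.

Lemma sumL2_blists_S i (G : list bool -> list bool -> R) :
  sumL (blists (S i)) (fun x => sumL (blists (S i)) (G x)) =
  sumL (blists i) (fun z => sumL (blists i) (fun xz =>
     sumB (fun a => sumB (fun c => G (xz ++ [a]) (z ++ [c]))))).
Proof.
  rewrite sumL_blists_S.
  transitivity (sumL (blists i) (fun xz => sumL (blists i) (fun z =>
     sumB (fun a => sumB (fun c => G (xz ++ [a]) (z ++ [c])))))).
  - apply sumL_ext_in. intros xz _.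
    transitivity (sumB (fun a => sumL (blists i) (fun z => sumB (fun c => G (xz ++ [a]) (z ++ [c]))))).
    + apply sumB_ext. intros a. apply sumL_blists_S.
    + apply sumB_sumL.
  - apply sumL_comm.
Qed.

Lemma firstn_snoc {A} j (l : list A) a : (j <= length l)%nat -> firstn j (l ++ [a]) = firstn j l.
Proof.
  intros H. rewrite firstn_app. replace (j - length l)%nat with 0%nat by lia. apply app_nil_r.
Qed.

Lemma firstn_blists_snoc i (z : list bool) c : In z (blists i) -> firstn i (z ++ [c]) = z.
Proof.
  intros Hz. apply blists_length in Hz. subst i. rewrite firstn_snoc by lia. apply firstn_all.
Qed.

Lemma nth_blists_snoc i (z : list bool) c : In z (blists i) -> nth i (z ++ [c]) false = c.
Proof. intros Hz. apply blists_length in Hz. subst i. apply nth_middle. Qed.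


Lemma ln2_pos : 0 < ln 2.
Proof. pose proof ln_lt_2. lra. Qed.

Lemma log2_mult x y : 0 < x -> 0 < y -> log2 (x * y) = log2 x + log2 y.
Proof. intros. unfold log2. rewrite ln_mult by auto. field. pose proof ln2_pos; lra. Qed.

Lemma log2_div x y : 0 < x -> 0 < y -> log2 (x / y) = log2 x - log2 y.
Proof.
  intros. unfold log2, Rdiv. rewrite ln_mult, ln_Rinv by auto using Rinv_0_lt_compat.
  field. pose proof ln2_pos; lra.
Qed.

Lemma log2_increasing x y : 0 < x -> x < y -> log2 x < log2 y.
Proof.
  intros. unfold log2, Rdiv. apply Rmult_lt_compat_r.
  - apply Rinv_0_lt_compat, ln2_pos.
  - apply ln_increasing; auto.
Qed.

Lemma log2_Rpower2 x : log2 (Rpower 2 x) = x.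
Proof. unfold log2. rewrite ln_Rpower. field. pose proof ln2_pos; lra. Qed.

Lemma plog_eq p r : plog p r = p * log2 r.
Proof. unfold plog. destruct (Req_EM_T p 0); subst; ring. Qed.

Lemma Hb_eq p : Hb p = - (p * log2 p) - (1 - p) * log2 (1 - p).
Proof. unfold Hb. rewrite !plog_eq. reflexivity. Qed.

Lemma Hb_sym p : Hb (1 - p) = Hb p.
Proof. rewrite !Hb_eq. replace (1 - (1 - p)) with p by ring. ring. Qed.

Lemma Hb_scaled L W : 0 <= L <= W -> 0 < W ->
  W * Hb (L / W) = W * log2 W - L * log2 L - (W - L) * log2 (W - L).
Proof.
  intros HL HW. rewrite Hb_eq. replace (1 - L / W) with ((W - L) / W) by (field; lra).
  assert (Hx : forall x, 0 <= x -> W * (x / W * log2 (x / W)) = x * log2 x - x * log2 W).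
  { intros x Hx. destruct (Req_dec x 0) as [->|Hne]; [field; lra|].
    rewrite log2_div by lra. field. lra. }
  rewrite Rmult_minus_distr_l, Ropp_mult_distr_r_reverse, !Hx by lra. ring.
Qed.

Definition Hb_deriv (y : R) : R := log2 ((1 - y) / y).

Lemma Hb_deriv_decreasing u v : 0 < u -> u < v -> v < 1 -> Hb_deriv v < Hb_deriv u.
Proof.
  intros. unfold Hb_deriv. apply log2_increasing.
  - apply Rdiv_lt_0_compat; lra.
  - apply Rmult_lt_reg_r with (u * v); [nra|].
    unfold Rdiv. replace ((1 - v) * / v * (u * v)) with ((1 - v) * u) by (field; lra).
    replace ((1 - u) * / u * (u * v)) with ((1 - u) * v) by (field; lra). nra.
Qed.

Lemma Hb_deriv_antitone u v : 0 < u -> u <= v -> v < 1 -> Hb_deriv v <= Hb_deriv u.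
Proof.
  intros. destruct (Req_dec u v) as [->|]; [lra|].
  left. apply Hb_deriv_decreasing; lra.
Qed.

Lemma xln_ratio_le y y0 : 0 <= y -> 0 < y0 -> y * (ln y0 - ln y) <= y0 - y.
Proof.
  intros Hy Hy0. destruct (Req_dec y 0) as [->|Hne]; [lra|].
  assert (Hpos : 0 < y) by lra.
  pose proof (exp_ineq1_le (ln (y0 / y))) as Hexp.
  rewrite exp_ln in Hexp by (apply Rdiv_lt_0_compat; lra).
  unfold Rdiv in Hexp. rewrite ln_mult, ln_Rinv in Hexp by auto using Rinv_0_lt_compat.
  apply Rmult_le_compat_l with (r := y) in Hexp; [|lra].
  replace (y * (y0 * / y)) with y0 in Hexp by (field; lra). lra.
Qed.

Lemma Hb_tangent y0 y : 0 < y0 < 1 -> 0 <= y <= 1 ->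
  Hb y <= Hb y0 + (y - y0) * Hb_deriv y0.
Proof.
  intros H0 H.
  assert (Hgap : Hb y0 + (y - y0) * Hb_deriv y0 - Hb y
                 = - (y * (ln y0 - ln y) + (1 - y) * (ln (1 - y0) - ln (1 - y))) / ln 2).
  { rewrite !Hb_eq. unfold Hb_deriv. rewrite log2_div by lra. unfold log2.
    field. pose proof ln2_pos. lra. }
  pose proof (xln_ratio_le y y0 ltac:(lra) ltac:(lra)).
  pose proof (xln_ratio_le (1 - y) (1 - y0) ltac:(lra) ltac:(lra)).
  assert (0 <= - (y * (ln y0 - ln y) + (1 - y) * (ln (1 - y0) - ln (1 - y))) / ln 2).
  { apply Rle_mult_inv_pos; [lra|apply ln2_pos]. }
  lra.
Qed.

Lemma Hb_chord u v l : 0 <= u -> u < v -> v <= 1 -> 0 < l < 1 ->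
  Hb_deriv l * (v - u) = Hb v - Hb u -> u <= l <= v.
Proof.
  intros Hu Huv Hv Hl Hs. split.
  - destruct (Req_dec u 0) as [->|Hu0]; [lra|].
    pose proof (Hb_tangent u v ltac:(lra) ltac:(lra)).
    destruct (Rlt_le_dec l u); [|auto].
    pose proof (Hb_deriv_decreasing l u ltac:(lra) ltac:(lra) ltac:(lra)). nra.
  - destruct (Req_dec v 1) as [->|Hv1]; [lra|].
    pose proof (Hb_tangent v u ltac:(lra) ltac:(lra)).
    destruct (Rlt_le_dec v l); [|auto].
    pose proof (Hb_deriv_decreasing v l ltac:(lra) ltac:(lra) ltac:(lra)). nra.
Qed.

(** * The single-letter information function *)

(** [I(A; B | B_{-1} = s)] for an input with [P(A = s) = x]. *)
Definition mi_cost (al be x : R) : R := Hb (lambar al be x) - x * Hb al - (1 - x) * Hb be.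
Definition mi_cost_slope (al be k : R) : R :=
  (al + be - 1) * Hb_deriv (lambar al be k) - Hb al + Hb be.

Section SingleLetter.
Variables al be : R.
Hypothesis Hal : 0 <= al <= 1.
Hypothesis Hbe : 0 <= be <= 1.

Lemma lambar_bounds x : 0 <= x <= 1 -> 0 <= lambar al be x <= 1.
Proof. intros. unfold lambar. split; nra. Qed.

Lemma mi_cost_tangent k x : 0 < lambar al be k < 1 -> 0 <= x <= 1 ->
  mi_cost al be x <= mi_cost al be k + mi_cost_slope al be k * (x - k).
Proof.
  intros Hk Hx. pose proof (Hb_tangent _ _ Hk (lambar_bounds x Hx)).
  unfold mi_cost, mi_cost_slope. unfold lambar in *. nra.
Qed.

Lemma scaled_mi_cost_tangent k V W : 0 < lambar al be k < 1 -> 0 <= V <= W ->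
  W * mi_cost al be (V / W) <= W * mi_cost al be k + mi_cost_slope al be k * (V - k * W).
Proof.
  intros Hk HV. destruct (Req_dec W 0) as [E|E].
  { replace V with 0 by lra. subst W. lra. }
  assert (Hx : 0 <= V / W <= 1).
  { split; [apply Rle_mult_inv_pos; lra|].
    apply Rmult_le_reg_r with W; [lra|]. unfold Rdiv. rewrite Rmult_assoc, Rinv_l; lra. }
  pose proof (mi_cost_tangent k (V / W) Hk Hx) as Ht.
  apply Rmult_le_compat_l with (r := W) in Ht; [|lra].
  replace (W * (mi_cost al be k + mi_cost_slope al be k * (V / W - k))) with
    (W * mi_cost al be k + mi_cost_slope al be k * (V - k * W)) in Ht by (field; lra).
  exact Ht.
Qed.

Hypothesis Hab : al + be <> 1.

Lemma lam_bounds : 0 < lam al be < 1.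
Proof.
  assert (0 < Rpower 2 (mu al be)) by apply exp_pos.
  unfold lam. split.
  - apply Rinv_0_lt_compat. lra.
  - rewrite <- Rinv_1. apply Rinv_lt_contravar; lra.
Qed.

Lemma Hb_deriv_lam : Hb_deriv (lam al be) = mu al be.
Proof.
  assert (0 < Rpower 2 (mu al be)) by apply exp_pos.
  unfold Hb_deriv, lam.
  replace ((1 - / (1 + Rpower 2 (mu al be))) / / (1 + Rpower 2 (mu al be)))
    with (Rpower 2 (mu al be)) by (field; lra).
  apply log2_Rpower2.
Qed.

Lemma lambar_nu : lambar al be (nu al be) = lam al be.
Proof.
  assert (0 < Rpower 2 (mu al be)) by apply exp_pos.
  unfold lambar, nu, lam. field. split; lra.
Qed.

Lemma lambar_sub_lam k : lambar al be k - lam al be = (al + be - 1) * (k - nu al be).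
Proof. rewrite <- lambar_nu. unfold lambar. ring. Qed.

(** [nu] lies in [[0, 1]] because [lam] lies between [al] and [1 - be]: it is where [Hb]
    has the slope of its chord between these two points. *)
Lemma nu_bounds : 0 <= nu al be <= 1.
Proof.
  pose proof lam_bounds. pose proof (lambar_sub_lam 0) as E0. pose proof (lambar_sub_lam 1) as E1.
  unfold lambar in E0, E1.
  assert (Hchord : Hb_deriv (lam al be) * (al - (1 - be)) = Hb al - Hb (1 - be)).
  { rewrite Hb_deriv_lam, Hb_sym. unfold mu. field. lra. }
  destruct (Rlt_le_dec al (1 - be)).
  - assert (al <= lam al be <= 1 - be) by (apply Hb_chord; lra). nra.
  - assert (1 - be <= lam al be <= al) by (apply Hb_chord; lra). nra.
Qed.

Lemma mi_cost_slope_nu : mi_cost_slope al be (nu al be) = 0.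
Proof. unfold mi_cost_slope. rewrite lambar_nu, Hb_deriv_lam. unfold mu. field. lra. Qed.

Lemma lambar_in_01 k : 0 < k <= nu al be -> 0 < lambar al be k < 1.
Proof.
  intros Hk. pose proof lam_bounds. pose proof (lambar_sub_lam 0) as E0.
  assert (E : lambar al be k * nu al be = (nu al be - k) * (1 - be) + k * lam al be).
  { rewrite <- lambar_nu. unfold lambar. ring. }
  unfold lambar in E0. split; nra.
Qed.

Lemma mi_cost_slope_nonneg k : 0 < k <= nu al be -> 0 <= mi_cost_slope al be k.
Proof.
  intros Hk. pose proof (lambar_in_01 k Hk). pose proof lam_bounds.
  pose proof mi_cost_slope_nu as D. pose proof (lambar_sub_lam k) as E.
  unfold mi_cost_slope in *. rewrite lambar_nu in D.
  destruct (Rlt_le_dec 0 (al + be - 1)).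
  - assert (lambar al be k <= lam al be) by nra.
    pose proof (Hb_deriv_antitone (lambar al be k) (lam al be) ltac:(lra) ltac:(lra) ltac:(lra)). nra.
  - assert (lam al be <= lambar al be k) by (assert (al + be - 1 < 0) by lra; nra).
    pose proof (Hb_deriv_antitone (lam al be) (lambar al be k) ltac:(lra) ltac:(lra) ltac:(lra)).
    assert (al + be - 1 < 0) by lra. nra.
Qed.

Lemma mi_cost_le x k : 0 <= x <= k -> k <= nu al be -> mi_cost al be x <= mi_cost al be k.
Proof.
  intros Hx Hk. destruct (Req_dec k 0) as [->|Hk0]; [replace x with 0 by lra; lra|].
  pose proof nu_bounds.
  pose proof (mi_cost_tangent k x (lambar_in_01 k ltac:(lra)) ltac:(lra)).
  pose proof (mi_cost_slope_nonneg k ltac:(lra)). nra.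
Qed.

End SingleLetter.

Lemma Q_sum al be a s : bssc_Q al be false a s + bssc_Q al be true a s = 1.
Proof. unfold bssc_Q; destruct a, s; simpl; ring. Qed.

Lemma Q_bounds al be c a s : 0 <= al <= 1 -> 0 <= be <= 1 -> 0 <= bssc_Q al be c a s <= 1.
Proof. unfold bssc_Q; intros; destruct c, a, s; simpl; lra. Qed.

Lemma pr_bounds p a : 0 <= p <= 1 -> 0 <= pr p a <= 1.
Proof. intros; destruct a; simpl; lra. Qed.

Lemma sumB_pr_split p s (h : bool -> R) :
  sumB (fun a => pr p a * h a) = pr p s * h s + (1 - pr p s) * h (negb s).
Proof. unfold sumB. destruct s; simpl; ring. Qed.

(** Unnormalised law of the output [c] from state [s] when the input equals [s]
    with mass [V] out of a total mass [W]. *)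
Definition out_mix (al be V W : R) (s c : bool) : R :=
  V * bssc_Q al be c s s + (W - V) * bssc_Q al be c (negb s) s.

Definition div_out (al be V W : R) (s a : bool) : R :=
  sumB (fun c => bssc_Q al be c a s *
                 (log2 (bssc_Q al be c a s) + log2 W - log2 (out_mix al be V W s c))).

Lemma mix_div_out al be V W s : 0 <= al <= 1 -> 0 <= be <= 1 -> 0 <= V <= W ->
  V * div_out al be V W s s + (W - V) * div_out al be V W s (negb s)
  = W * mi_cost al be (V / W).
Proof.
  intros Hal Hbe HV. destruct (Req_dec W 0) as [EW|NW].
  { replace V with 0 by lra. subst W. ring. }
  set (L := V * al + (W - V) * (1 - be)).
  assert (HL : 0 <= L <= W) by (unfold L; split; nra).
  assert (HWL : W * Hb (L / W) = W * log2 W - L * log2 L - (W - L) * log2 (W - L))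
    by (apply Hb_scaled; lra).
  assert (Hlam : lambar al be (V / W) = L / W) by (unfold lambar, L; field; lra).
  unfold mi_cost. rewrite Hlam.
  replace (W * (Hb (L / W) - V / W * Hb al - (1 - V / W) * Hb be))
    with (W * Hb (L / W) - V * Hb al - (W - V) * Hb be) by (field; lra).
  rewrite HWL, !Hb_eq.
  unfold div_out, out_mix, sumB, bssc_Q. destruct s; simpl;
    replace (V * (1 - al) + (W - V) * be) with (W - L) by (unfold L; ring);
    unfold L; ring.
Qed.

(** The bounds [m * q <= W, Y] keep the junk values of [log2] at [0] out of the picture. *)
Lemma plog_ratio m q W Y : 0 <= m -> 0 <= q -> m * q <= W -> m * q <= Y ->
  plog (m * q) (m * q * W / (m * Y)) = m * q * (log2 q + log2 W - log2 Y).
Proof.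
  intros Hm Hq HW HY. rewrite plog_eq.
  destruct (Req_dec (m * q) 0) as [E|E]; [rewrite E; ring|].
  assert (0 < m) by (destruct Hm as [|<-]; [assumption|lra]).
  assert (0 < q) by (destruct Hq as [|<-]; [assumption|lra]).
  replace (m * q * W / (m * Y)) with (q * W / Y) by (field; split; nra).
  rewrite log2_div, log2_mult by nra. ring.
Qed.

(** * Slicing the process along the output history *)

Section Process.
Variables (al be : R) (b0 : bool) (pol : policy).
Hypothesis Hal : 0 <= al <= 1.
Hypothesis Hbe : 0 <= be <= 1.
Hypothesis Hpol : valid_policy pol.

Lemma joint_snoc k xs ys a c : length xs = k -> length ys = k ->
  joint al be b0 pol (S k) (xs ++ [a]) (ys ++ [c]) =
  joint al be b0 pol k xs ys * pr (pol k xs ys) a * bssc_Q al be c a (last ys b0).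
Proof.
  intros Hx Hy. unfold joint. rewrite seq_S, map_app, fold_right_app. simpl.
  assert (Hacc : forall (l : list R) x, fold_right Rmult x l = fold_right Rmult 1 l * x).
  { induction l as [|r l IH]; intros x; simpl; [ring|rewrite IH; ring]. }
  rewrite Hacc, Rmult_1_r, <- Rmult_assoc. subst k.
  assert (Ey : firstn (length xs) (ys ++ [c]) = ys)
    by (rewrite firstn_snoc, <- Hy by lia; apply firstn_all).
  assert (Ec : nth (length xs) (ys ++ [c]) false = c) by (rewrite <- Hy; apply nth_middle).
  rewrite firstn_snoc, firstn_all, nth_middle, Ey, Ec by lia.
  do 3 f_equal. apply map_ext_in. intros j Hj. apply in_seq in Hj.
  rewrite !firstn_snoc, !app_nth1 by lia. reflexivity.
Qed.

Lemma joint_nonneg k xs ys : 0 <= joint al be b0 pol k xs ys.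
Proof.
  unfold joint. induction (seq 0 k) as [|j l IH]; simpl; [lra|].
  apply Rmult_le_pos; [apply Rmult_le_pos|exact IH].
  - apply pr_bounds, Hpol.
  - apply Q_bounds; assumption.
Qed.

(** [prefix_mass i z = P(B^{i-1} = z)] and [cost_mass i z = P(B^{i-1} = z, A_i = B_{i-1})]. *)
Definition prefix_mass i z := sumL (blists i) (fun xz => joint al be b0 pol i xz z).
Definition cost_mass i z :=
  sumL (blists i) (fun xz => joint al be b0 pol i xz z * pr (pol i xz z) (last z b0)).

Lemma cost_mass_bounds i z : 0 <= cost_mass i z <= prefix_mass i z.
Proof.
  unfold cost_mass, prefix_mass. split.
  - apply sumL_nonneg. intros xz _.
    apply Rmult_le_pos; [apply joint_nonneg|apply pr_bounds, Hpol].
  - apply sumL_le. intros xz _. pose proof (joint_nonneg i xz z).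
    pose proof (pr_bounds (pol i xz z) (last z b0) (Hpol _ _ _)). nra.
Qed.

Lemma P_i_snoc i xz z a c : In xz (blists i) -> In z (blists i) ->
  P_i al be b0 pol i (xz ++ [a]) (z ++ [c]) =
  joint al be b0 pol i xz z * pr (pol i xz z) a * bssc_Q al be c a (last z b0).
Proof. intros Hx Hz. apply joint_snoc; apply blists_length; assumption. Qed.

Lemma input_marginal i z (h : bool -> R) :
  sumL (blists i) (fun xz => sumB (fun a => joint al be b0 pol i xz z * pr (pol i xz z) a * h a))
  = cost_mass i z * h (last z b0) + (prefix_mass i z - cost_mass i z) * h (negb (last z b0)).
Proof.
  unfold cost_mass, prefix_mass. rewrite <- sumL_minus, <- !sumL_scal_r, <- sumL_plus.
  apply sumL_ext_in. intros xz _. unfold sumB. destruct (last z b0); simpl; ring.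
Qed.

Lemma mass_slice i z (g : bool -> bool -> R) : In z (blists i) ->
  sumL (blists i) (fun xz => sumB (fun a => sumB (fun c =>
    P_i al be b0 pol i (xz ++ [a]) (z ++ [c]) * g a c)))
  = cost_mass i z * sumB (fun c => bssc_Q al be c (last z b0) (last z b0) * g (last z b0) c)
    + (prefix_mass i z - cost_mass i z)
      * sumB (fun c => bssc_Q al be c (negb (last z b0)) (last z b0) * g (negb (last z b0)) c).
Proof.
  intros Hz.
  etransitivity;
    [|exact (input_marginal i z (fun a => sumB (fun c => bssc_Q al be c a (last z b0) * g a c)))].
  apply sumL_ext_in. intros xz Hxz. apply sumB_ext. intros a.
  rewrite <- sumB_scal_l. apply sumB_ext. intros c. rewrite P_i_snoc by assumption. ring.
Qed.

Lemma P_z_eq i z : In z (blists i) -> P_z al be b0 pol i z = prefix_mass i z.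
Proof.
  intros Hz. unfold P_z. rewrite sumL_blists_S.
  transitivity (sumL (blists i) (fun xz => sumB (fun a => sumB (fun c =>
    P_i al be b0 pol i (xz ++ [a]) (z ++ [c]) * 1)))).
  { apply sumL_ext_in. intros xz _. apply sumB_ext. intros a. apply sumB_ext. intros c. ring. }
  rewrite mass_slice by assumption. unfold sumB. rewrite !Rmult_1_r, !Q_sum. ring.
Qed.

Lemma P_xz_snoc i xz z a : In xz (blists i) -> In z (blists i) ->
  P_xz al be b0 pol i (xz ++ [a]) z = joint al be b0 pol i xz z * pr (pol i xz z) a.
Proof.
  intros Hx Hz. unfold P_xz, sumB. rewrite !P_i_snoc by assumption.
  rewrite <- Rmult_plus_distr_l, Q_sum. ring.
Qed.

Lemma P_yz_snoc i z c : In z (blists i) ->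
  P_yz al be b0 pol i (z ++ [c]) = out_mix al be (cost_mass i z) (prefix_mass i z) (last z b0) c.
Proof.
  intros Hz. unfold P_yz, out_mix. rewrite sumL_blists_S.
  etransitivity; [|exact (input_marginal i z (fun a => bssc_Q al be c a (last z b0)))].
  apply sumL_ext_in. intros xz Hxz. apply sumB_ext. intros a. apply P_i_snoc; assumption.
Qed.

Lemma sum_prefix_mass i : sumL (blists i) (prefix_mass i) = 1.
Proof.
  induction i as [|i IH]; [unfold prefix_mass, joint; simpl; ring|].
  rewrite sumL_blists_S, <- IH. apply sumL_ext_in. intros z Hz.
  rewrite <- P_z_eq by assumption. unfold P_z, prefix_mass. apply sumB_sumL.
Qed.

Lemma cost_term_eq i : cost_term al be b0 pol i = sumL (blists i) (cost_mass i).
Proof.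
  unfold cost_term. rewrite sumL2_blists_S. apply sumL_ext_in. intros z Hz.
  transitivity (sumL (blists i) (fun xz => sumB (fun a => sumB (fun c =>
    P_i al be b0 pol i (xz ++ [a]) (z ++ [c]) * gam a (last z b0))))).
  { apply sumL_ext_in. intros xz Hxz. apply sumB_ext. intros a. apply sumB_ext. intros c.
    rewrite nth_blists_snoc, firstn_blists_snoc by assumption. reflexivity. }
  rewrite mass_slice by assumption.
  unfold sumB, gam. destruct (last z b0); simpl; rewrite !Rmult_1_r, !Rmult_0_r, ?Q_sum; ring.
Qed.

Lemma cmi_term_eq i : cmi_term al be b0 pol i =
  sumL (blists i) (fun z => prefix_mass i z * mi_cost al be (cost_mass i z / prefix_mass i z)).
Proof.
  unfold cmi_term. rewrite sumL2_blists_S. apply sumL_ext_in. intros z Hz.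
  set (s := last z b0). set (V := cost_mass i z). set (W := prefix_mass i z).
  rewrite <- (mix_div_out al be V W s) by (try apply cost_mass_bounds; assumption).
  etransitivity; [|exact (mass_slice i z
    (fun a c => log2 (bssc_Q al be c a s) + log2 W - log2 (out_mix al be V W s c)) Hz)].
  apply sumL_ext_in. intros xz Hxz. apply sumB_ext. intros a. apply sumB_ext. intros c.
  rewrite firstn_blists_snoc, P_z_eq, P_xz_snoc, P_yz_snoc by assumption. fold s V W.
  assert (HW : P_i al be b0 pol i (xz ++ [a]) (z ++ [c]) <= W).
  { rewrite P_i_snoc by assumption. fold s.
    pose proof (joint_nonneg i xz z). pose proof (pr_bounds (pol i xz z) a (Hpol _ _ _)).
    pose proof (Q_bounds al be c a s Hal Hbe).
    assert (joint al be b0 pol i xz z <= W).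
    { apply (sumL_ge_term _ (fun xz => joint al be b0 pol i xz z)); auto using joint_nonneg. }
    assert (0 <= joint al be b0 pol i xz z * pr (pol i xz z) a <= W) by nra.
    nra. }
  assert (HY : P_i al be b0 pol i (xz ++ [a]) (z ++ [c]) <= out_mix al be V W s c).
  { unfold V, W, s. rewrite <- P_yz_snoc by assumption.
    apply (sumL_ge_term _ (fun x => P_i al be b0 pol i x (z ++ [c]))); auto using In_blists_snoc.
    intros. apply joint_nonneg. }
  rewrite P_i_snoc in * by assumption. fold s in HW, HY |- *. apply plog_ratio; auto.
  - apply Rmult_le_pos; [apply joint_nonneg|apply pr_bounds, Hpol].
  - apply Q_bounds; assumption.
Qed.

End Process.

(** * Optimality of the time-invariant input *)

Lemma sum_f_R0_affine (c : nat -> R) a d k n :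
  sum_f_R0 (fun i => a + d * (c i - k)) n = INR (S n) * a + d * (sum_f_R0 c n - INR (S n) * k).
Proof. induction n as [|n IH]; simpl sum_f_R0; [simpl; ring|rewrite IH, !S_INR; ring]. Qed.

Lemma sum_f_R0_nonneg_eq0 (c : nat -> R) n : (forall i, 0 <= c i) ->
  sum_f_R0 c n <= 0 -> forall i, (i <= n)%nat -> c i = 0.
Proof.
  induction n as [|n IH]; intros H Hs i Hi; simpl in Hs.
  - replace i with 0%nat by lia. pose proof (H 0%nat). lra.
  - pose proof (H (S n)). pose proof (cond_pos_sum c n H).
    destruct (Nat.eq_dec i (S n)) as [->|]; [lra|].
    apply IH; [assumption|lra|lia].
Qed.

Lemma valid_pi_TI b0 ka : 0 <= ka <= 1 -> valid_policy (pi_TI b0 ka).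
Proof. intros H i xs ys. unfold pi_TI. destruct (last ys b0); lra. Qed.

Section TimeInvariant.
Variables al be : R.
Hypothesis Hal : 0 <= al <= 1.
Hypothesis Hbe : 0 <= be <= 1.
Variables (b0 : bool) (ka : R).
Hypothesis Hka : 0 <= ka <= 1.

Lemma cost_mass_TI i z :
  cost_mass al be b0 (pi_TI b0 ka) i z = ka * prefix_mass al be b0 (pi_TI b0 ka) i z.
Proof.
  unfold cost_mass, prefix_mass. rewrite <- sumL_scal_l. apply sumL_ext_in. intros xz _.
  unfold pi_TI. destruct (last z b0); simpl; ring.
Qed.

Lemma cmi_term_TI i : cmi_term al be b0 (pi_TI b0 ka) i = mi_cost al be ka.
Proof.
  rewrite cmi_term_eq by auto using valid_pi_TI.
  rewrite <- (Rmult_1_l (mi_cost al be ka)), <- (sum_prefix_mass al be b0 (pi_TI b0 ka) i).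
  rewrite <- sumL_scal_r. apply sumL_ext_in. intros z _. rewrite cost_mass_TI.
  destruct (Req_dec (prefix_mass al be b0 (pi_TI b0 ka) i z) 0) as [E|E].
  - rewrite E. ring.
  - f_equal. f_equal. field. exact E.
Qed.

Lemma cost_term_TI i : cost_term al be b0 (pi_TI b0 ka) i = ka.
Proof.
  rewrite cost_term_eq. erewrite sumL_ext_in by (intros; apply cost_mass_TI).
  rewrite sumL_scal_l, sum_prefix_mass. ring.
Qed.

Lemma DI_TI n : DI al be b0 (pi_TI b0 ka) n = INR (S n) * mi_cost al be ka.
Proof.
  unfold DI. rewrite Rmult_comm, <- sum_cte. apply sum_eq. intros. apply cmi_term_TI.
Qed.

Lemma feasible_TI n k : ka <= k -> feasible al be b0 n k (pi_TI b0 ka).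
Proof.
  intros Hk. split; [apply valid_pi_TI, Hka|]. unfold avg_cost.
  rewrite (sum_eq _ (fun _ => ka)), sum_cte by (intros; apply cost_term_TI).
  pose proof (lt_0_INR (S n) ltac:(lia)).
  replace (/ INR (S n) * (ka * INR (S n))) with ka by (field; lra). exact Hk.
Qed.

Lemma output_transition_TI i y : In y (blists (S i)) ->
  P_z al be b0 (pi_TI b0 ka) i (firstn i y) <> 0 ->
  P_yz al be b0 (pi_TI b0 ka) i y / P_z al be b0 (pi_TI b0 ka) i (firstn i y)
  = if Bool.eqb (nth i y false) (last (firstn i y) b0)
    then lambar al be ka else 1 - lambar al be ka.
Proof.
  intros Hy Hz.
  destruct (exists_last (l := y)) as [z [c ->]].
  { intros ->. apply blists_length in Hy. discriminate. }
  assert (Hzi : In z (blists i)).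
  { apply In_blists. apply blists_length in Hy. rewrite length_app in Hy. simpl in Hy. lia. }
  rewrite firstn_blists_snoc, nth_blists_snoc in * by assumption.
  rewrite P_z_eq in * by auto using valid_pi_TI.
  rewrite P_yz_snoc, cost_mass_TI by auto using valid_pi_TI.
  unfold out_mix, bssc_Q, lambar. destruct c, (last z b0); simpl; field; exact Hz.
Qed.

End TimeInvariant.

Section UpperBound.
Variables al be : R.
Hypothesis Hal : 0 <= al <= 1.
Hypothesis Hbe : 0 <= be <= 1.
Variables (b0 : bool) (pol : policy).
Hypothesis Hpol : valid_policy pol.

Lemma DI_tangent n k : 0 < lambar al be k < 1 ->
  DI al be b0 pol n <= INR (S n) * mi_cost al be k
    + mi_cost_slope al be k * (sum_f_R0 (cost_term al be b0 pol) n - INR (S n) * k).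
Proof.
  intros Hk. rewrite <- sum_f_R0_affine. apply sum_Rle. intros i _.
  rewrite cmi_term_eq, cost_term_eq by assumption.
  replace (mi_cost al be k + mi_cost_slope al be k * (sumL (blists i) (cost_mass al be b0 pol i) - k))
    with (sumL (blists i) (fun z => prefix_mass al be b0 pol i z * mi_cost al be k
           + mi_cost_slope al be k * (cost_mass al be b0 pol i z - k * prefix_mass al be b0 pol i z))).
  - apply sumL_le. intros z _.
    apply scaled_mi_cost_tangent; auto using cost_mass_bounds.
  - rewrite sumL_plus, sumL_scal_l, sumL_minus, sumL_scal_l, sumL_scal_r, sum_prefix_mass. ring.
Qed.

Hypothesis Hab : al + be <> 1.

Lemma DI_le_unconstrained n :
  DI al be b0 pol n <= INR (S n) * mi_cost al be (nu al be).
Proof.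
  pose proof (DI_tangent n (nu al be)) as H.
  rewrite lambar_nu, mi_cost_slope_nu in H by assumption.
  specialize (H (lam_bounds al be)). lra.
Qed.

Lemma DI_le_constrained n ka : 0 <= ka <= nu al be ->
  avg_cost al be b0 pol n <= ka -> DI al be b0 pol n <= INR (S n) * mi_cost al be ka.
Proof.
  intros Hk Hc. pose proof (lt_0_INR (S n) ltac:(lia)) as HS.
  assert (Hsum : sum_f_R0 (cost_term al be b0 pol) n <= INR (S n) * ka).
  { unfold avg_cost in Hc. apply Rmult_le_compat_l with (r := INR (S n)) in Hc; [|lra].
    rewrite <- Rmult_assoc, Rinv_r, Rmult_1_l in Hc by lra. exact Hc. }
  destruct (Req_dec ka 0) as [->|Hk0].
  - (* The tangent at [0] may be vertical; instead, zero cost makes every [cost_mass] vanish. *)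
    rewrite Rmult_0_r in Hsum.
    assert (Hzero : forall i, (i <= n)%nat -> cost_term al be b0 pol i = 0).
    { apply sum_f_R0_nonneg_eq0; [|exact Hsum]. intros i. rewrite cost_term_eq.
      apply sumL_nonneg. intros z _. apply cost_mass_bounds; assumption. }
    unfold DI. rewrite Rmult_comm, <- sum_cte. apply sum_Rle. intros i Hi.
    rewrite cmi_term_eq by assumption. rewrite <- (Rmult_1_l (mi_cost al be 0)).
    rewrite <- (sum_prefix_mass al be b0 pol i), <- sumL_scal_r.
    apply Req_le, sumL_ext_in. intros z Hz.
    specialize (Hzero i Hi). rewrite cost_term_eq in Hzero.
    rewrite (sumL_eq0 _ _ (fun z _ => proj1 (cost_mass_bounds al be b0 pol Hal Hbe Hpol i z))
      Hzero z Hz).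
    unfold Rdiv. rewrite Rmult_0_l. reflexivity.
  - pose proof (DI_tangent n ka (lambar_in_01 al be Hal Hbe Hab ka ltac:(lra))).
    pose proof (mi_cost_slope_nonneg al be Hal Hbe Hab ka ltac:(lra)). nra.
Qed.

End UpperBound.

Lemma MI2_single_letter al be b0 p : 0 <= al <= 1 -> 0 <= be <= 1 -> 0 <= p <= 1 ->
  MI2 (fun a b => pr p a * bssc_Q al be b a b0) = mi_cost al be (pr p b0).
Proof.
  intros Hal Hbe Hp. unfold MI2.
  transitivity (sumB (fun a => pr p a * div_out al be (pr p b0) 1 b0 a)).
  - apply sumB_ext. intros a. unfold div_out. rewrite <- sumB_scal_l. apply sumB_ext. intros c.
    pose proof (pr_bounds p a Hp). pose proof (Q_bounds al be c a b0 Hal Hbe).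
    assert (HY : pr p a * bssc_Q al be c a b0 <= sumB (fun a' => pr p a' * bssc_Q al be c a' b0)).
    { pose proof (pr_bounds p (negb a) Hp). pose proof (Q_bounds al be c (negb a) b0 Hal Hbe).
      unfold sumB. destruct a; simpl in *; nra. }
    assert (Ea : sumB (fun b' => pr p a * bssc_Q al be b' a b0) = pr p a).
    { unfold sumB. rewrite <- Rmult_plus_distr_l, Q_sum. ring. }
    rewrite sumB_pr_split with (s := b0) in HY |- *. fold (out_mix al be (pr p b0) 1 b0 c) in HY |- *.
    rewrite Ea. replace (pr p a * bssc_Q al be c a b0 / (pr p a * out_mix al be (pr p b0) 1 b0 c))
      with (pr p a * bssc_Q al be c a b0 * 1 / (pr p a * out_mix al be (pr p b0) 1 b0 c))
      by (unfold Rdiv; ring).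
    rewrite plog_ratio by nra. ring.
  - rewrite sumB_pr_split with (s := b0), mix_div_out by (try apply pr_bounds; auto).
    rewrite Rdiv_1_r. ring.
Qed.

Lemma SLset_max al be b0 ka : 0 <= al <= 1 -> 0 <= be <= 1 -> al + be <> 1 ->
  0 <= ka <= nu al be -> is_max (SLset al be b0 ka) (mi_cost al be ka).
Proof.
  intros Hal Hbe Hab Hk. pose proof (nu_bounds al be Hal Hbe Hab). split.
  - set (p := if b0 then ka else 1 - ka).
    assert (Ep : pr p b0 = ka) by (unfold p; destruct b0; simpl; ring).
    exists p. split; [unfold p; destruct b0; lra|].
    rewrite MI2_single_letter, Ep by (unfold p; destruct b0; lra). split; [lra|reflexivity].
  - intros r [p [Hp [Hc ->]]]. rewrite MI2_single_letter by assumption.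
    apply mi_cost_le; try assumption; try lra. split; [apply pr_bounds|]; assumption.
Qed.

Lemma is_lub_DIset al be b0 n ka k : 0 <= al <= 1 -> 0 <= be <= 1 -> 0 <= k <= 1 -> k <= ka ->
  (forall pol, feasible al be b0 n ka pol -> DI al be b0 pol n <= INR (S n) * mi_cost al be k) ->
  is_lub (DIset al be b0 n ka) (INR (S n) * mi_cost al be k).
Proof.
  intros Hal Hbe Hk Hka Hub. split.
  - intros r [pol [Hf ->]]. exact (Hub pol Hf).
  - intros m Hm. apply Hm. exists (pi_TI b0 k). split.
    + apply feasible_TI; assumption.
    + symmetry. apply DI_TI; assumption.
Qed.

Lemma Un_cv_const (u : nat -> R) l : (forall n, u n = l) -> Un_cv u l.
Proof.
  intros H eps Heps. exists 0%nat. intros n _. unfold R_dist.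
  rewrite H, Rminus_diag, Rabs_R0. exact Heps.
Qed.

Theorem mainTheorem10 (al be : R) (Hal : 0 <= al <= 1) (Hbe : 0 <= be <= 1)
  (Hab : al + be <> 1) :
  (* (a) *)
  (forall ka : R, 0 <= ka <= nu al be -> forall (n : nat) (b0 : bool),
     feasible al be b0 n ka (pi_TI b0 ka) /\
     (forall pol, feasible al be b0 n ka pol ->
        DI al be b0 pol n <= DI al be b0 (pi_TI b0 ka) n) /\
     (exists m, is_max (SLset al be b0 ka) m /\
                DI al be b0 (pi_TI b0 ka) n = INR (S n) * m) /\
     (forall (i : nat) (y : list bool), In y (blists (S i)) ->
        P_z al be b0 (pi_TI b0 ka) i (firstn i y) <> 0 ->
        P_yz al be b0 (pi_TI b0 ka) i y / P_z al be b0 (pi_TI b0 ka) i (firstn i y)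
        = (if Bool.eqb (nth i y false) (last (firstn i y) b0)
           then lambar al be ka else 1 - lambar al be ka))) /\
  (* (b) *)
  (forall (ka : R) (b0 : bool), 0 <= ka ->
     exists C : nat -> R,
       (forall n, is_lub (DIset al be b0 n ka) (C n)) /\
       Un_cv (fun n => C n / INR (S n))
         (if Rle_dec ka (nu al be)
          then Hb (lambar al be ka) - ka * Hb al - (1 - ka) * Hb be
          else Hb (lam al be) - nu al be * Hb al - (1 - nu al be) * Hb be)).
Proof.
  pose proof (nu_bounds al be Hal Hbe Hab) as Hnu.
  assert (HS : forall n, INR (S n) <> 0) by (intros n; apply not_0_INR; lia).
  split.
  - intros ka Hk n b0. assert (Hk1 : 0 <= ka <= 1) by lra.
    split; [|split; [|split]].
    + apply feasible_TI; lra.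
    + intros pol [Hp Hc]. rewrite DI_TI by assumption. now apply DI_le_constrained.
    + exists (mi_cost al be ka). split; [now apply SLset_max|now apply DI_TI].
    + now apply output_transition_TI.
  - intros ka b0 Hka. destruct (Rle_dec ka (nu al be)) as [Hle|Hgt].
    + exists (fun n => INR (S n) * mi_cost al be ka). split.
      * intros n. apply is_lub_DIset; try lra.
        intros pol [Hp Hc]. apply DI_le_constrained; auto; lra.
      * apply Un_cv_const. intros n. unfold mi_cost. field. apply HS.
    + exists (fun n => INR (S n) * mi_cost al be (nu al be)). split.
      * intros n. apply is_lub_DIset; try lra.
        intros pol [Hp _]. now apply DI_le_unconstrained.
      * apply Un_cv_const. intros n. unfold mi_cost. rewrite lambar_nu by assumption.
        field. apply HS.
Qed.
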